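(* Let $(X,d)$ be a nonempty compact homogeneous metric space of diameter $D$, and let $m$ be a Borel probability measure on $X$ invariant under all isometries. Let $A=\int_{X\times X} d(x,y)\,d(m\times m)(x,y)$. Then $A=\frac{D}{2}$ if and only if $X$ is strictly antipodal.
   Context: A metric space is homogeneous if its isometry group acts transitively on its points. Let $X$ be a compact metric space of diameter $D=\sup_{x,y}d(x,y)$. $X$ is called antipodal if for every $x\in X$ there exists at least one point $O_x\in X$ (an antipode of $x$) with $d(x,O_x)=D$ such that there is an isometry of $X$ mapping $x$ to $O_x$. $X$ is called strictly antipodal if it is antipodal and, for every $x\in X$ and every antipode $O_x$ of $x$, one has $D=d(x,y)+d(y,O_x)$ for all $y\in X$. *)

From HB Require Import structures.
From mathcomp Require Import all_boot all_order all_algebra.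
From mathcomp Require Import all_classical all_reals all_analysis.
Set Implicit Arguments. Unset Strict Implicit. Unset Printing Implicit Defensive.
Import Order.TTheory GRing.Theory Num.Theory.
Local Open Scope classical_set_scope.
Local Open Scope ring_scope.

Section MetricDefs.
Variables (R : realType) (T : Type) (d : T -> T -> R).

Definition is_metric : Prop :=
  [/\ forall x y, 0 <= d x y,
      forall x y, d x y = 0 <-> x = y,
      forall x y, d x y = d y x &
      forall x y z, d x z <= d x y + d y z].

Definition mball (x : T) (e : R) : set T := [set y | d x y < e].
Definition mopen (A : set T) : Prop :=
  forall x, A x -> exists2 e : R, 0 < e & mball x e `<=` A.

Definition mcompact : Prop :=
  forall (I : Type) (U : I -> set T), (forall i, mopen (U i)) ->
    \bigcup_(i in [set: I]) U i = [set: T] ->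
    exists2 F : set I, finite_set F & \bigcup_(i in F) U i = [set: T].

Definition is_isometry (f : T -> T) : Prop :=
  bijective f /\ forall x y, d (f x) (f y) = d x y.

Definition metric_homogeneous : Prop :=
  forall x y, exists2 f, is_isometry f & f x = y.

Definition mdiam : R := sup [set d p.1 p.2 | p in [set: T * T]].

Definition is_antipode (x o : T) : Prop :=
  d x o = mdiam /\ exists2 f, is_isometry f & f x = o.

Definition antipodal : Prop := forall x, exists o, is_antipode x o.

Definition strictly_antipodal : Prop :=
  antipodal /\
  forall x o, is_antipode x o -> forall y, mdiam = d x y + d y o.

End MetricDefs.

Definition borel_of (R : realType) (T : pointedType) (d : T -> T -> R) :=
  g_sigma_algebraType (mopen d).

From HB Require Import structures.
From mathcomp Require Import all_boot all_order all_algebra.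
From mathcomp Require Import all_classical all_reals all_analysis.
From mathcomp Require Import lra measurable_realfun.
Import Order.TTheory GRing.Theory Num.Theory.
Local Open Scope classical_set_scope.
Local Open Scope ring_scope.

(* For an antipode o of x the triangle inequality gives D <= d x y + d y o for every y.
   Invariance of m makes y |-> \int d y z dm(z) constant along isometries, hence constant by
   homogeneity, and by Tonelli this constant is A; so the integral of d x y + d y o over y is
   2A.  Thus 2A = D forces d x y + d y o = D almost everywhere, and then everywhere: a strict
   inequality at y persists on a ball around y, and every ball has positive measure since
   finitely many isometric copies of it cover X.  Conversely, strict antipodality makes the
   integrand identically D.  Antipodes exist because d x attains D on the compact X and
   homogeneity carries x to any point. *)

Section Metric.
Context {R : realType} {T : Type} {d : T -> T -> R}.
Hypothesis hmet : is_metric d.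

Lemma metric_ge0 x y : 0 <= d x y. Proof. by case: hmet. Qed.
Lemma metric_xx x : d x x = 0. Proof. by case: hmet => _ h _ _; apply/h. Qed.
Lemma metric_sym x y : d x y = d y x. Proof. by case: hmet. Qed.
Lemma metric_triangle x y z : d x z <= d x y + d y z. Proof. by case: hmet. Qed.

Lemma ler_dist_dist q x y : `|d q x - d q y| <= d x y.
Proof.
rewrite ler_norml; have := metric_triangle q x y; have := metric_triangle q y x.
by rewrite (metric_sym y x); lra.
Qed.

Lemma le_dist_detour x y z w : d x y + d y z <= d x w + d w z + 2 * d w y.
Proof.
have := metric_triangle x w y; have := metric_triangle y w z.
by rewrite (metric_sym y w); lra.
Qed.

Lemma mopen_dist_gt q r : mopen d [set y | r < d q y].
Proof.
move=> y /= ry; exists (d q y - r) => [|z]; first by rewrite subr_gt0.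
by rewrite /mball /=; have := metric_triangle q z y; rewrite (metric_sym z y); lra.
Qed.

Lemma mopen_dist_lt q r : mopen d [set y | d q y < r].
Proof.
move=> y /= ry; exists (r - d q y) => [|z]; first by rewrite subr_gt0.
by rewrite /mball /=; have := metric_triangle q y z; lra.
Qed.

Lemma isometry_inverse f : is_isometry d f -> exists2 g, is_isometry d g & cancel g f.
Proof.
move=> [[g fK gK] fiso]; exists g => //; split; first by exists f.
by move=> x y; rewrite -fiso !gK.
Qed.

End Metric.

Section Compact.
Context {R : realType} {T : pointedType} {d : T -> T -> R}.
Hypotheses (hmet : is_metric d) (hcomp : mcompact d).

Lemma mcompact_finite_net e : 0 < e ->
  exists s : seq T, forall x, exists2 z, z \in s & d z x < e.
Proof.
move=> e0.
have [|F Ffin FU] := hcomp T (fun z => mball d z e) (fun z => mopen_dist_lt hmet z e).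
  by apply/seteqP; split => // x _; exists x => //; rewrite /mball /= metric_xx.
exists (finmap.enum_fset (fset_set F)) => x.
have [z Fz xz] : (\bigcup_(z in F) mball d z e) x by rewrite FU.
by exists z => //; rewrite in_fset_set // inE.
Qed.

Lemma mcompact_nondecreasing_cover (U : nat -> set T) :
  (forall n, mopen d (U n)) -> (forall n k, (n <= k)%N -> U n `<=` U k) ->
  (forall x, exists n, U n x) -> exists N, forall x, U N x.
Proof.
move=> Uo Uh Ucov; have [|F Ffin FU] := hcomp _ _ Uo.
  by apply/seteqP; split => // x _; have [n Un] := Ucov x; exists n.
exists (\max_(i <- finmap.enum_fset (fset_set F)) i) => x.
have [n Fn Unx] : (\bigcup_(i in F) U i) x by rewrite FU.
by apply: Uh Unx; apply: leq_bigmax_seq => //; rewrite in_fset_set // inE.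
Qed.

Section UpperSemicontinuous.
Variable f : T -> R.
Hypothesis f_usc : forall r, mopen d [set y | f y < r].

Lemma mcompact_usc_bounded : exists M, forall y, f y <= M.
Proof.
have [|||N HN] := mcompact_nondecreasing_cover (fun n => [set y | f y < n%:R]).
- by move=> n; exact: f_usc.
- by move=> n k nk y /= /lt_le_trans; apply; rewrite ler_nat.
- by move=> y; exists (Num.truncn (f y)).+1; exact: truncnS_gt.
- by exists N%:R => y; apply: ltW; exact: HN.
Qed.

Lemma mcompact_usc_lt_uniform M : (forall y, f y < M) ->
  exists2 M', M' < M & forall y, f y <= M'.
Proof.
move=> fM.
have [|||N HN] :=
  mcompact_nondecreasing_cover (fun n => [set y | f y < M - n.+1%:R^-1]).
- by move=> n; exact: f_usc.
- move=> n k nk y /= /lt_le_trans; apply; rewrite lerD2l lerN2.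
  by rewrite lef_pV2 ?posrE // ler_nat.
- by move=> y; have [n hn] := ltr_add_invr (fM y); exists n => /=; rewrite ltrBrDl addrC.
- exists (M - N.+1%:R^-1) => [|y]; last exact/ltW/HN.
  by rewrite gtrBl invr_gt0.
Qed.

End UpperSemicontinuous.

Lemma mcompact_dist_bounded : exists M, forall x y, d x y <= M.
Proof.
have [M HM] := mcompact_usc_bounded (d point) (mopen_dist_lt hmet point).
exists (M + M) => x y; have := metric_triangle hmet x point y.
by rewrite (metric_sym hmet x point); have := HM x; have := HM y; lra.
Qed.

Lemma has_sup_dist : has_sup [set d p.1 p.2 | p in [set: T * T]].
Proof.
split; first by exists (d point point), (point, point).
by have [M HM] := mcompact_dist_bounded; exists M => _ [p _ <-]; exact: HM.
Qed.

Lemma dist_le_mdiam x y : d x y <= mdiam d.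
Proof. by apply: (sup_upper_bound has_sup_dist); exists (x, y). Qed.

Lemma mdiam_le r : (forall x y, d x y <= r) -> mdiam d <= r.
Proof.
move=> h; apply: ge_sup; first by exists (d point point), (point, point).
by move=> _ [p _ <-]; exact: h.
Qed.

Lemma mdiam_ge0 : 0 <= mdiam d.
Proof. exact: le_trans (metric_ge0 hmet point point) (dist_le_mdiam _ _). Qed.

Hypothesis hhom : metric_homogeneous d.

Lemma homogeneous_mdiam_attained x : exists y, d x y = mdiam d.
Proof.
apply/not_existsP => hn.
have [|M' M'D HM'] := mcompact_usc_lt_uniform (d x) (mopen_dist_lt hmet x) (mdiam d).
  by move=> y; rewrite lt_neqAle dist_le_mdiam andbT; apply/eqP; exact: hn.
suff : mdiam d <= M' by rewrite leNgt M'D.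
apply: mdiam_le => a b; have [f [_ fiso] fa] := hhom a x.
by rewrite -fiso fa.
Qed.

Lemma homogeneous_antipodal : antipodal d.
Proof.
move=> x; have [y xy] := homogeneous_mdiam_attained x.
have [f fiso fx] := hhom x y.
by exists y; split => //; exists f.
Qed.

End Compact.

Section Measurability.
Context {R : realType} {T : pointedType} {d : T -> T -> R}.
Hypotheses (hmet : is_metric d) (hcomp : mcompact d).
Local Notation B := (borel_of d).

Lemma mopen_measurable (A : set B) : mopen d A -> measurable A.
Proof. exact: sub_sigma_algebra. Qed.

Lemma measurable_fun_isometry f : is_isometry d f -> measurable_fun [set: B] (f : B -> B).
Proof.
move=> [_ fiso]; apply: (measurability _ (erefl (@measurable _ B))).
move=> _ [A mA <-]; rewrite setTI; apply: sub_sigma_algebra.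
move=> x /= Afx; have [e e0 he] := mA _ Afx.
by exists e => // y /= xy; apply: he; rewrite /mball /= fiso.
Qed.

Lemma measurable_dist_l q : measurable_fun [set: B] (d q).
Proof.
apply: (measurability _ (RGenOInfty.measurableE R)).
move=> _ [_ [r ->] <-]; rewrite setTI; apply: mopen_measurable.
rewrite (_ : _ @^-1` _ = [set y | r < d q y]); first exact: mopen_dist_gt.
by apply/seteqP; split => y /=; rewrite in_itv /= andbT.
Qed.

Lemma mcompact_separable : exists q : nat -> nat -> T,
  forall x e, 0 < e -> exists n i, d (q n i) x < e.
Proof.
have [s hs] : {s : nat -> seq T &
    forall n x, exists2 z, z \in s n & d z x < n.+1%:R^-1}.
  apply: (@choice _ _ (fun n s => forall x, exists2 z, z \in s & d z x < n.+1%:R^-1)).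
  by move=> n; apply: (mcompact_finite_net hmet hcomp); rewrite invr_gt0.
exists (fun n => nth point (s n)) => x e e0.
have [n] := ltr_add_invr e0; rewrite add0r => ne.
have [z zs zx] := hs n x.
by exists n, (index z (s n)); rewrite nth_index //; exact: lt_trans ne.
Qed.

Lemma lt_dist_dense (q : nat -> nat -> T) x y r :
  (forall x e, 0 < e -> exists n i, d (q n i) x < e) ->
  r < d x y -> exists n i, r < `|d (q n i) x - d (q n i) y|.
Proof.
move=> qdense rxy.
have [|n [i qx]] := qdense x ((d x y - r) / 2); first by rewrite divr_gt0 // subr_gt0.
exists n, i; rewrite distrC; apply: lt_le_trans (ler_norm _).
have := metric_triangle hmet x (q n i) y; rewrite (metric_sym hmet x (q n i)).
by lra.
Qed.

(* The product sigma-algebra is only generated by rectangles, so d is written as a countable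
   supremum of the measurable functions |d q x - d q y|, q ranging over a dense sequence. *)
Lemma measurable_dist : measurable_fun [set: B * B] (fun z : B * B => d z.1 z.2).
Proof.
have [q qdense] := mcompact_separable.
pose g n i (z : B * B) := `|d (q n i) z.1 - d (q n i) z.2|.
have mg n i : measurable_fun [set: B * B] (g n i).
  apply: measurableT_comp; first exact: normr_measurable.
  apply: measurable_funB.
    exact: measurableT_comp (measurable_dist_l _) measurable_fst.
  exact: measurableT_comp (measurable_dist_l _) measurable_snd.
apply: (measurability _ (RGenOInfty.measurableE R)).
move=> _ [_ [r ->] <-]; rewrite setTI.
rewrite (_ : _ @^-1` _ = \bigcup_n \bigcup_i (g n i @^-1` `]r, +oo[)).
  apply: bigcupT_measurable => n; apply: bigcupT_measurable => i.
  by rewrite -[X in measurable X]setTI; exact: mg.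
apply/seteqP; split => -[x y] /=; rewrite ?in_itv /= ?andbT.
  by move=> /(lt_dist_dense _ _ _ _ qdense) [n [i ?]]; exists n => //; exists i => //=;
    rewrite in_itv /= andbT.
move=> [n _ [i _]]; rewrite /g /= in_itv /= andbT => /lt_le_trans; apply.
exact: ler_dist_dist.
Qed.

End Measurability.

Section ProbabilityIntegral.
Local Open Scope ereal_scope.
Context {dX : measure_display} {X : measurableType dX} {R : realType}.
Variable P : probability X R.

Lemma probability_integral_cst (c : \bar R) : \int[P]_(x in [set: X]) cst c x = c.
Proof.
by rewrite integral_cst // [X in _ * X](_ : _ = 1) ?mule1 //; exact: probability_setT.
Qed.

Lemma cst_lt_integral (g : X -> \bar R) (A : set X) (c e : R) :
  measurable A -> measurable_fun [set: X] g -> (0 <= c)%R -> (0 < e)%R ->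
  0 < P A -> (forall x, (c + e * \1_A x)%:E <= g x) ->
  c%:E < \int[P]_(x in [set: X]) g x.
Proof.
move=> mA mg c0 e0 PA0 gge.
have mind : measurable_fun [set: X] (fun x => (e * \1_A x)%:E).
  apply/measurable_EFinP/measurable_funM; first exact: measurable_cst.
  exact: measurable_indic.
have ind0 x : 0 <= (e * \1_A x)%:E by rewrite lee_fin mulr_ge0 // ltW.
have -> : c%:E = \int[P]_(x in [set: X]) cst c%:E x by rewrite probability_integral_cst.
have lower : \int[P]_(x in [set: X]) (cst c%:E x + (e * \1_A x)%:E) =
    c%:E + e%:E * P A.
  rewrite ge0_integralD //.
  rewrite probability_integral_cst (integralZl_indic measurableT (fun _ => A)) //.
    by rewrite integral_indic // setIT.
  by move=> e_lt0; move: e0; rewrite ltNge ltW.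
rewrite probability_integral_cst; apply: lt_le_trans (_ : c%:E + e%:E * P A <= _).
  by rewrite lteDl // mule_gt0 // lte_fin.
rewrite -lower; apply: ge0_le_integral => //.
- by move=> x _; rewrite -EFinD lee_fin addr_ge0 // mulr_ge0 // ltW.
- by apply: emeasurable_funD => //; exact: measurable_cst.
- by move=> x _; rewrite -EFinD.
Qed.

End ProbabilityIntegral.

Section InvariantMeasure.
Context {R : realType} {T : pointedType} {d : T -> T -> R}.
Hypotheses (hmet : is_metric d) (hcomp : mcompact d) (hhom : metric_homogeneous d).
Local Notation B := (borel_of d).
Variable m : probability B R.
Hypothesis hinv : forall f : T -> T, is_isometry d f ->
  forall A : set B, measurable A -> m (f @^-1` A) = m A.
Local Open Scope ereal_scope.

Definition mean_dist (x : T) : \bar R := \int[m]_(y in [set: B]) (d x y)%:E.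

Let measurable_dist_lE q : measurable_fun [set: B] (fun y => (d q y)%:E).
Proof. by apply/measurable_EFinP; exact: measurable_dist_l. Qed.

Let dist_ge0E q y : 0 <= (d q y)%:E.
Proof. by rewrite lee_fin (metric_ge0 hmet). Qed.

Lemma mean_dist_isometry f x : is_isometry d f -> mean_dist (f x) = mean_dist x.
Proof.
move=> fI; have [g giso gK] := isometry_inverse _ fI; have [_ fiso] := fI.
rewrite /mean_dist.
transitivity (\int[m]_(y in [set: B]) ((fun z : B => (d x z)%:E) \o g) y).
  by apply: eq_integral => y _ /=; rewrite -[in RHS]fiso gK.
have := ge0_integral_pushforward (measurable_fun_isometry _ giso) m measurableT
  (measurable_dist_lE x) (fun y _ => dist_ge0E x y).
rewrite preimage_setT => <-.
apply: eq_measure_integral; first exact: measurable_fun_isometry giso.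
by move=> mg A mA _ /=; rewrite /pushforward hinv.
Qed.

Lemma mean_dist_const x y : mean_dist x = mean_dist y.
Proof. by have [f fI <-] := hhom y x; exact: mean_dist_isometry. Qed.

Lemma integral_dist_prod :
  \int[m \x m]_(z in [set: B * B]) (d z.1 z.2)%:E = mean_dist point.
Proof.
rewrite fubini_tonelli1 /fubini_F /=; first last.
- by move=> z; exact: dist_ge0E.
- by apply/measurable_EFinP; exact: measurable_dist.
under eq_integral do rewrite -/(mean_dist _) (mean_dist_const _ point).
exact: probability_integral_cst.
Qed.

Lemma measure_ball_gt0 y r : (0 < r)%R -> 0 < m (mball d y r).
Proof.
move=> r0; rewrite lt0e measure_ge0 andbT; apply/eqP => my0.
have mball0 z : m (mball d z r) = 0.
  have [f fI fz] := hhom z y.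
  rewrite -my0 -[in RHS](hinv _ fI); last first.
    by apply: mopen_measurable; exact: mopen_dist_lt.
  congr (m _); apply/seteqP.
  by split => w; rewrite /preimage /mball /= -fz (proj2 fI).
have [s hs] := mcompact_finite_net hmet hcomp _ r0.
have : m.-negligible (\bigcup_k (mball d (nth point s k) r : set B)).
  apply: negligible_bigcup => k; exists (mball d (nth point s k) r).
  by split; [apply: mopen_measurable; exact: mopen_dist_lt | exact: mball0 |].
move=> [A [mA mA0 sA]].
suff AT : A = setT by move: mA0; rewrite AT probability_setT => /eqP; rewrite onee_eq0.
apply/seteqP; split => // x _; apply: sA.
have [z zs zx] := hs x; exists (index z s) => //.
by rewrite nth_index.
Qed.

Lemma integral_dist_sum x o :
  \int[m]_(y in [set: B]) ((d x y)%:E + (d o y)%:E) = mean_dist point + mean_dist point.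
Proof.
rewrite ge0_integralD //.
by rewrite -/(mean_dist x) -/(mean_dist o) !(mean_dist_const _ point).
Qed.

Lemma strictly_antipodal_of_mean_dist :
  mean_dist point = (mdiam d / 2)%:E -> strictly_antipodal d.
Proof.
move=> hmean; split; first exact: homogeneous_antipodal.
move=> x o [xo _] y; apply/eqP; rewrite eq_le -{1}xo metric_triangle //=.
rewrite leNgt; apply/negP => hlt.
pose eps := (d x y + d y o - mdiam d)%R.
have eps0 : (0 < eps)%R by rewrite subr_gt0.
have D0 := mdiam_ge0 hmet hcomp.
suff : (mdiam d)%:E < \int[m]_(w in [set: B]) ((d x w)%:E + (d o w)%:E).
  by rewrite integral_dist_sum hmean -EFinD lte_fin; lra.
apply: (@cst_lt_integral _ _ _ m _ (mball d y (eps / 4)) _ (eps / 2)) => //.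
- by apply: mopen_measurable; exact: mopen_dist_lt.
- exact: emeasurable_funD.
- by rewrite divr_gt0.
- by apply: measure_ball_gt0; rewrite divr_gt0.
move=> w; rewrite -EFinD lee_fin (metric_sym hmet o w).
have := le_dist_detour hmet x y o w; have := metric_triangle hmet x w o.
rewrite xo indicE; have [|_] := boolP (w \in mball d y (eps / 4)).
  rewrite inE /mball /= mulr1 (metric_sym hmet w y) /eps; lra.
by rewrite mulr0 addr0; lra.
Qed.

Lemma mean_dist_of_strictly_antipodal :
  strictly_antipodal d -> mean_dist point = (mdiam d / 2)%:E.
Proof.
move=> [anti strict]; case: (anti point) => o ho.
have : mean_dist point + mean_dist point = (mdiam d)%:E.
  rewrite -(integral_dist_sum point o) -[RHS](probability_integral_cst m).
  apply: eq_integral => y _ /=.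
  by rewrite -EFinD (metric_sym hmet o y) -(strict point o ho y).
case: (mean_dist point) => [r| |] //= /eqP; rewrite eqe => /eqP hr.
by congr (_%:E); lra.
Qed.

End InvariantMeasure.

Theorem proposition2p4 (R : realType) (T : pointedType) (d : T -> T -> R)
  (hmet : is_metric d) (hcomp : mcompact d) (hhom : metric_homogeneous d)
  (m : probability (borel_of d) R)
  (hinv : forall f : T -> T, is_isometry d f ->
     forall A : set (borel_of d), measurable A -> m (f @^-1` A) = m A) :
  (\int[(m \x m)%E]_(z in [set: borel_of d * borel_of d]) (d z.1 z.2)%:E
     = (mdiam d / 2)%:E)%E
  <-> strictly_antipodal d.
Proof.
rewrite (integral_dist_prod hmet hcomp hhom m hinv); split.
- exact: strictly_antipodal_of_mean_dist hmet hcomp hhom m hinv.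
- exact: mean_dist_of_strictly_antipodal hmet hhom m hinv.
Qed.
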